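(* Assume: (1) each $h_i$ is measurable in $\xi_i$ and continuously differentiable in $x_i$ for every fixed $x_{-i}\in X_{-i}$, $\xi_i\in\Xi_i$; (2) each $X_i$ is compact and convex and $h_i(\cdot,x_{-i},\xi_i)$ is convex for every $x_{-i},\xi_i$; (3) for each $i$, every distribution $\mathbb{Q}_i$ in agent $i$'s ambiguity set belongs to $\mathcal{M}(\Xi_i)$ and there is $a_i>1$ with $\mathbb{E}_{\mathbb{Q}_i}[\exp(\|\xi_i\|^{a_i})]<\infty$; (4) for every $i\in\mathcal{N}$ and $j\in\{1,\dots,n\}$ there is $L_{i,j}\ge0$ with $\big|\frac{\partial h_i(x,\xi_i)}{\partial x_i^{(j)}}-\frac{\partial h_i(x,\xi_i')}{\partial x_i^{(j)}}\big|\le L_{i,j}\|\xi_i-\xi_i'\|$ for all $x\in X$, $\xi_i,\xi_i'\in\Xi_i$. Let $\epsilon_i(K_i,\beta_i)\ge0$ be the radius used by agent $i$ and $\mathcal{W}_K(\hat{\mathbb{P}}_K)=\prod_{i=1}^N\mathbb{B}_{\epsilon_i(K_i,\beta_i)}(\hat{\mathbb{P}}_{K_i})$. Then for any $x$ in an open set $V\subset X$ and any $q_K=\mathrm{col}((q_{K_i})_i)\in\mathcal{W}_K(\hat{\mathbb{P}}_K)$, $$\|F_{q_K}(x)-F_{\mathbb{P}}(x)\|^2\le\rho_K:=\sum_{i=1}^N\sum_{j=1}^{n}L_{i,j}^2\big[\epsilon_i(K_i,\beta_i)+d_W(\hat{\mathbb{P}}_{K_i},\mathbb{P}_i)\big]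^2.$$
   Context: Agents $i\in\mathcal{N}=\{1,\dots,N\}$ choose $x_i=\mathrm{col}(x_i^{(1)},\dots,x_i^{(n)})\in X_i\subseteq\mathbb{R}^n$; $X=\prod_iX_i$, $x=\mathrm{col}((x_i)_i)$, $x_{-i}$ the others' decisions, $X_{-i}=\prod_{j\ne i}X_j$. Agent $i$'s cost is $h_i:\mathbb{R}^{nN}\times\Xi_i\to\mathbb{R}$ with uncertainty $\xi_i\in\Xi_i\subseteq\mathbb{R}^p$ whose true distribution is $\mathbb{P}_i$; $\mathbb{P}=\mathrm{col}((\mathbb{P}_i)_i)$. $\|\cdot\|$ is the Euclidean norm; $\mathcal{M}(\Xi_i)$ is the set of distributions on $\Xi_i$ with finite first moment; $d_W(\mathbb{Q}_1,\mathbb{Q}_2)=\inf_\Pi\int\|\xi_1-\xi_2\|\Pi(d\xi_1,d\xi_2)$ over couplings $\Pi$ of $\mathbb{Q}_1,\mathbb{Q}_2$. From $K_i$ samples $\xi_i^{(1)},\dots,\xi_i^{(K_i)}$, $\hat{\mathbb{P}}_{K_i}=\frac1{K_i}\sum_k\delta_{\xi_i^{(k)}}$, and $\mathbb{B}_\epsilon(\hat{\mathbb{P}}_{K_i})=\{\mathbb{Q}\in\mathcal{M}(\Xi_i):d_W(\hat{\mathbb{P}}_{K_i},\mathbb{Q})\le\epsilon\}$ is agent $i$'s ambiguity set. For a collection $q=\mathrm{col}((q_i)_i)$ of distributions, $F_q(x)=\mathrm{col}((\nabla_{x_i}\mathbb{E}_{q_i}[h_i(x_i,x_{-i},\xi_i)])_{i\in\mathcal{N}})$.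 *)

From HB Require Import structures.
From mathcomp Require Import all_boot all_order all_algebra.
From mathcomp Require Import all_classical all_reals all_analysis.
Set Implicit Arguments. Unset Strict Implicit. Unset Printing Implicit Defensive.
Import Order.TTheory GRing.Theory Num.Theory.
Import numFieldNormedType.Exports.
Local Open Scope classical_set_scope.
Local Open Scope ring_scope.

Definition Rp (R : realType) (p : nat) := g_sigma_algebraType (@open 'rV[R]_p).

Definition enorm (R : realType) (p : nat) (u : 'rV[R]_p) : R :=
  Num.sqrt (\sum_(k < p) (u ord0 k) ^+ 2).

Definition xi_dist (R : realType) (p : nat) (u v : Rp R p) : R :=
  enorm ((u : 'rV[R]_p) - (v : 'rV[R]_p)).

Definition distr_M (R : realType) (p : nat) (Xi : set (Rp R p))
  (Q : probability (Rp R p) R) : Prop :=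
  Q Xi = 1%E /\ (\int[Q]_(z in Xi) (enorm (z : 'rV[R]_p))%:E < +oo)%E.

Definition coupling (R : realType) (p : nat)
  (Q1 Q2 : set (Rp R p) -> \bar R) (Pi : probability (Rp R p * Rp R p)%type R) : Prop :=
  forall A : set (Rp R p), measurable A ->
    Pi (A `*` setT) = Q1 A /\ Pi (setT `*` A) = Q2 A.

Definition dW (R : realType) (p : nat) (Q1 Q2 : set (Rp R p) -> \bar R) : \bar R :=
  ereal_inf [set (\int[Pi]_z (xi_dist z.1 z.2)%:E)%E
            | Pi in [set Pi | coupling Q1 Q2 Pi]].

Definition empirical (R : realType) (p K : nat) (xi : 'I_K -> Rp R p)
  (A : set (Rp R p)) : \bar R :=
  ((K%:R)^-1%:E * \sum_(k < K) \d_(xi k) A)%E.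

Definition wball (R : realType) (p : nat) (Xi : set (Rp R p)) (eps : R)
  (Q0 : set (Rp R p) -> \bar R) : set (probability (Rp R p) R) :=
  [set Q | distr_M Xi Q /\ (dW Q0 Q <= eps%:E)%E].

Definition replace_row (R : realType) (N n : nat) (x : 'M[R]_(N, n)) (i : 'I_N)
  (y : 'rV[R]_n) : 'M[R]_(N, n) :=
  \matrix_(k, j) (if k == i then y ord0 j else x k j).

Definition expcost (R : realType) (p N n : nat) (Xi : set (Rp R p))
  (Q : probability (Rp R p) R) (h : 'M[R]_(N, n) -> Rp R p -> R)
  (x : 'M[R]_(N, n)) : R :=
  Rintegral Q Xi (h x).

(* component (i,j) of F_q(x) = d/dx_i^(j) E_{q_i}[h_i(x, xi_i)] *)
Definition Fcomp (R : realType) (p N n : nat) (Xi : 'I_N -> set (Rp R p))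
  (q : 'I_N -> probability (Rp R p) R)
  (h : 'I_N -> 'M[R]_(N, n) -> Rp R p -> R) (x : 'M[R]_(N, n))
  (i : 'I_N) (j : 'I_n) : R :=
  'D_(delta_mx i j) (expcost (Xi i) (q i) (h i)) x.

(* Fix a component (i, j) and let g(z) be the partial derivative of h_i in the
   direction x_i^(j) at x with uncertainty z; g is L_ij-Lipschitz on Xi_i.
   Differentiation under the integral sign, justified by dominated convergence
   with the bound C + L_ij * (distance from z to the nearest sample point),
   which is integrable for every distribution at finite Wasserstein distance
   from the empirical one, shows that the (i, j) components of F_q(x) and
   F_P(x) are the expectations of g under q_i and P_i.  Comparing both
   expectations with the one under the empirical distribution through
   near-optimal couplings gives |E_q g - E_P g| <= L_ij (eps_i + d_W), the
   Kantorovich-Rubinstein estimate; squaring and summing yields the bound.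
   If d_W is infinite the bound is trivial unless L_ij = 0, and then g is
   constant on Xi_i. *)
From HB Require Import structures.
From mathcomp Require Import all_boot all_order all_algebra.
From mathcomp Require Import all_classical all_reals all_analysis.
From mathcomp Require Import measurable_realfun.
From mathcomp Require Import lra.
Import Order.TTheory GRing.Theory Num.Theory.
Import numFieldNormedType.Exports.
Local Open Scope classical_set_scope.
Local Open Scope ring_scope.
Set Implicit Arguments. Unset Strict Implicit. Unset Printing Implicit Defensive.

Section xi_dist.
Context {R : realType} {p : nat}.

Lemma measurable_coord (k : 'I_p) :
  measurable_fun [set: Rp R p] (fun z : Rp R p => (z : 'rV[R]_p) ord0 k).
Proof.
apply: (measurability _ (RGenOpens.measurableE R)) => /= _ [_ [a [b ->]] <-].
rewrite setTI; apply: sub_sigma_algebra.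
apply: (@open_comp _ _ (fun u : 'rV[R]_p => u ord0 k)); last exact: itv_open.
by move=> u _; exact: coord_continuous.
Qed.

Lemma measurable_xi_dist d (T : measurableType d) (a b : T -> Rp R p) :
  measurable_fun setT a -> measurable_fun setT b ->
  measurable_fun [set: T] (fun t => xi_dist (a t) (b t)).
Proof.
move=> ma mb; rewrite /xi_dist /enorm.
change (measurable_fun setT (Num.sqrt \o (fun t =>
  \sum_(k < p) (((a t : 'rV[R]_p) - (b t : 'rV[R]_p)) ord0 k) ^+ 2))).
apply: measurableT_comp.
  exact: continuous_measurable_fun (@sqrt_continuous R).
apply: measurable_sum => k; apply: measurable_funX.
under eq_fun do rewrite !mxE.
by apply: measurable_funB; exact: measurableT_comp (measurable_coord k) _.
Qed.

Lemma xi_dist_ge0 (u w : Rp R p) : 0 <= xi_dist u w.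
Proof. exact: sqrtr_ge0. Qed.

Lemma xi_distC (u w : Rp R p) : xi_dist u w = xi_dist w u.
Proof.
rewrite /xi_dist /enorm; congr Num.sqrt; apply: eq_bigr => k _.
by rewrite !mxE -sqrrN opprB.
Qed.

Lemma measurable_set1_Rp (a : Rp R p) : measurable [set a].
Proof.
rewrite -(setCK [set a]); apply: measurableC; apply: sub_sigma_algebra.
rewrite openC.
exact: (accessible_closed_set1 (hausdorff_accessible (@norm_hausdorff _ _))).
Qed.

End xi_dist.

Section integral_same_image.
Local Open Scope ereal_scope.
Context {R : realType} d1 d2 d3 (T1 : measurableType d1) (T2 : measurableType d2)
  (Y : measurableType d3) (m1 : {measure set T1 -> \bar R})
  (m2 : {measure set T2 -> \bar R}) (s1 : T1 -> Y) (s2 : T2 -> Y).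
Hypotheses (ms1 : measurable_fun setT s1) (ms2 : measurable_fun setT s2).
Hypothesis same_image :
  forall A, measurable A -> m1 (s1 @^-1` A) = m2 (s2 @^-1` A).

Lemma ge0_integral_comp_same_image (f : Y -> \bar R) :
  measurable_fun setT f -> (forall y, 0 <= f y) ->
  \int[m1]_x f (s1 x) = \int[m2]_x f (s2 x).
Proof.
move=> mf f0.
have := ge0_integral_pushforward ms1 m1 measurableT mf (fun y _ => f0 y).
have := ge0_integral_pushforward ms2 m2 measurableT mf (fun y _ => f0 y).
rewrite !preimage_setT => <- <-.
by apply: eq_measure_integral => A mA _; exact: same_image.
Qed.

Lemma integrable_comp_same_image (f : Y -> \bar R) : measurable_fun setT f ->
  m1.-integrable setT (f \o s1) -> m2.-integrable setT (f \o s2).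
Proof.
move=> mf /integrableP[_ fi]; apply/integrableP; split; first exact: measurableT_comp.
rewrite -(ge0_integral_comp_same_image (f := fun y => `|f y|)) //.
exact: measurableT_comp.
Qed.

Lemma integral_comp_same_image (f : Y -> \bar R) : measurable_fun setT f ->
  m1.-integrable setT (f \o s1) ->
  \int[m1]_x f (s1 x) = \int[m2]_x f (s2 x).
Proof.
move=> mf i1; have i2 := integrable_comp_same_image mf i1.
have := @integral_pushforward _ _ _ _ _ _ ms1 m1 setT f mf.
have := @integral_pushforward _ _ _ _ _ _ ms2 m2 setT f mf.
rewrite !preimage_setT => /(_ i2 measurableT) <- /(_ i1 measurableT) <-.
by apply: eq_measure_integral => A mA _; exact: same_image.
Qed.

End integral_same_image.

Section integral_conull.
Local Open Scope ereal_scope.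
Context {R : realType} d (T : measurableType d) (mu : {measure set T -> \bar R}).
Variables (S : set T) (mS : measurable S).
Hypothesis muSC0 : mu (~` S) = 0.

Lemma integral_setT_conull (f : T -> \bar R) : measurable_fun setT f ->
  \int[mu]_x f x = \int[mu]_(x in S) f x.
Proof.
move=> mf; have mSC : measurable (~` S) by exact: measurableC.
rewrite -(setUv S) integral_setU //.
- by rewrite (null_set_integral mSC) ?adde0 //; exact: measurable_funTS.
- by rewrite setUv.
- by rewrite /disj_set setICr.
Qed.

Lemma integrable_setT_conull (f : T -> \bar R) : measurable_fun setT f ->
  mu.-integrable S f -> mu.-integrable setT f.
Proof.
move=> mf /integrableP[_ fi]; apply/integrableP; split => //.
rewrite (integral_setT_conull (f := fun x => `|f x|)) //.
exact: measurableT_comp.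
Qed.

End integral_conull.

Lemma Rintegral_cst_on {R : realType} d (T : measurableType d) (Q : probability T R)
  (D : set T) (g : T -> R) (c : R) :
  measurable D -> Q D = 1%E -> (forall z, D z -> g z = c) -> Rintegral Q D g = c.
Proof.
move=> mD QD gc; rewrite (eq_Rintegral _ (g := cst c)); last by move=> z /[1!inE] /gc.
rewrite Rintegral_cst //; transitivity (c * fine (1%E : \bar R)); last by rewrite mulr1.
by congr (_ * fine _); exact: QD.
Qed.

Section couplings.
Local Open Scope ereal_scope.
Context {R : realType} {p : nat}.
Implicit Types (Q : set (Rp R p) -> \bar R)
  (Pi : probability (Rp R p * Rp R p)%type R) (A B : set (Rp R p)).

Definition transport_cost Pi := \int[Pi]_z (xi_dist z.1 z.2)%:E.

Lemma measurable_transport_integrand :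
  measurable_fun [set: (Rp R p * Rp R p)%type]
    (fun z : (Rp R p * Rp R p)%type => (xi_dist z.1 z.2)%:E).
Proof. exact/measurable_EFinP/measurable_xi_dist. Qed.

Lemma transport_cost_ge0 Pi : 0 <= transport_cost Pi.
Proof. by apply: integral_ge0 => z _; rewrite lee_fin xi_dist_ge0. Qed.

Lemma integrable_transport_integrand Pi : transport_cost Pi < +oo ->
  Pi.-integrable setT (fun z : (Rp R p * Rp R p)%type => (xi_dist z.1 z.2)%:E).
Proof.
move=> cost_fin; apply/integrableP; split; first exact: measurable_transport_integrand.
by under eq_integral => z _ do rewrite gee0_abs ?lee_fin ?xi_dist_ge0 //.
Qed.

Lemma dW_ge0 Q1 Q2 : 0 <= dW Q1 Q2.
Proof. by apply/ereal_infP => _ [Pi _ <-]; exact: transport_cost_ge0. Qed.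

Lemma dW_le_coupling Q1 Q2 (a del : R) : (0 < del)%R -> dW Q1 Q2 <= a%:E ->
  exists2 Pi, coupling Q1 Q2 Pi & transport_cost Pi < (a + del)%:E.
Proof.
move=> del0 dWa.
have dW_fin : dW Q1 Q2 \is a fin_num.
  by rewrite ge0_fin_numE ?dW_ge0 // (le_lt_trans dWa) ?ltry.
have [_ [Pi cPi <-] lt_Pi] := lb_ereal_inf_adherent del0 dW_fin.
by exists Pi => //; apply: (lt_le_trans lt_Pi); rewrite EFinD leeD2r.
Qed.

Lemma coupling_fst Q1 Q2 Pi A : coupling Q1 Q2 Pi -> measurable A ->
  Pi (fst @^-1` A) = Q1 A.
Proof.
move=> cpl mA; have [<- _] := cpl A mA; congr (Pi _).
by rewrite eqEsubset; split => [[a b]|[a b] []].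
Qed.

Lemma coupling_snd Q1 Q2 Pi A : coupling Q1 Q2 Pi -> measurable A ->
  Pi (snd @^-1` A) = Q2 A.
Proof.
move=> cpl mA; have [_ <-] := cpl A mA; congr (Pi _).
by rewrite eqEsubset; split => [[a b]|[a b] []].
Qed.

Lemma coupling_conull_setX Q1 Q2 Pi A B : coupling Q1 Q2 Pi ->
  measurable A -> measurable B -> Q1 (~` A) = 0 -> Q2 (~` B) = 0 ->
  Pi (~` (A `*` B)) = 0.
Proof.
move=> cpl mA mB QA0 QB0.
have -> : ~` (A `*` B) = fst @^-1` (~` A) `|` snd @^-1` (~` B).
  rewrite eqEsubset; split => [[a b]|[a b]]; rewrite /setX /setU /=.
    by move/not_andP.
  by move=> [] ?; apply/not_andP; [left|right].
apply: null_set_setU.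
- by rewrite -[X in measurable X]setTI; exact: measurable_fst (measurableC mA).
- by rewrite -[X in measurable X]setTI; exact: measurable_snd (measurableC mB).
- by rewrite -QA0; exact: coupling_fst cpl (measurableC mA).
- by rewrite -QB0; exact: coupling_snd cpl (measurableC mB).
Qed.

End couplings.

Section empirical.
Local Open Scope ereal_scope.
Context {R : realType} {p K : nat} (xi : 'I_K -> Rp R p).

Lemma measurable_sample_range : measurable (range xi).
Proof.
apply: countable_measurable; first exact: measurable_set1_Rp.
exact/finite_set_countable/finite_image/finite_finset.
Qed.

Lemma empirical_conull (A : set (Rp R p)) : (forall k, A (xi k)) ->
  empirical xi (~` A) = 0.
Proof.
move=> Axi; rewrite /empirical big1 ?mule0 // => k _.
by rewrite diracE memNset //= => /(_ (Axi k)).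
Qed.

Variable k0 : 'I_K.

Definition sample_dist (z : Rp R p) : R :=
  \big[Order.min/xi_dist z (xi k0)]_(k < K) xi_dist z (xi k).

Lemma sample_dist_le z k : (sample_dist z <= xi_dist z (xi k))%R.
Proof. exact: bigmin_le. Qed.

Lemma sample_dist_ge0 z : (0 <= sample_dist z)%R.
Proof. by apply: le_bigmin => *; exact: xi_dist_ge0. Qed.

Lemma sample_dist_attained z : exists k, sample_dist z = xi_dist z (xi k).
Proof.
apply: (big_ind (fun v => exists k, v = xi_dist z (xi k))) => [|u w|k _].
- by exists k0.
- move=> [k1 ->] [k2 ->].
  by case: (leP (xi_dist z (xi k1)) (xi_dist z (xi k2))); [exists k1|exists k2].
- by exists k.
Qed.

Lemma measurable_sample_dist : measurable_fun [set: Rp R p] sample_dist.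
Proof.
have mdist k : measurable_fun [set: Rp R p] (fun z => xi_dist z (xi k)).
  exact/measurable_xi_dist/measurable_cst.
rewrite /sample_dist; elim: (index_enum _) => [|k s IH].
  by under eq_fun do rewrite big_nil; exact: mdist.
by under eq_fun do rewrite big_cons; exact: measurable_minr.
Qed.

End empirical.

Section lipschitz_expectation.
Local Open Scope ereal_scope.
Context {R : realType} {p K : nat}.
Variables (Xi : set (Rp R p)) (mXi : measurable Xi) (xi : 'I_K -> Rp R p).
Implicit Types (Q : probability (Rp R p) R) (Pi : probability (Rp R p * Rp R p)%type R).

Let same_image_snd Q Pi : coupling (empirical xi) Q Pi ->
  forall A, measurable A -> Q (id @^-1` A) = Pi (snd @^-1` A).
Proof. by move=> cpl A mA; rewrite preimage_id (coupling_snd cpl mA). Qed.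

(* On the support of a coupling with the empirical distribution the first
   coordinate is a sample point, so the distance to the nearest sample point
   is dominated by the transport cost; no triangle inequality is needed. *)
Lemma integrable_sample_dist (k0 : 'I_K) Q (a : R) :
  dW (empirical xi) Q <= a%:E -> Q.-integrable Xi (fun z => (sample_dist xi k0 z)%:E).
Proof.
move=> dWa; have [Pi cpl cost_lt] := dW_le_coupling ltr01 dWa.
have mf : measurable_fun [set: Rp R p] (fun z => (sample_dist xi k0 z)%:E).
  by apply/measurable_EFinP; exact: measurable_sample_dist.
have f0 z : 0 <= (sample_dist xi k0 z)%:E by rewrite lee_fin sample_dist_ge0.
apply/integrableP; split; first exact: measurable_funTS.
under eq_integral do rewrite gee0_abs //.
apply: (le_lt_trans _ (lt_trans cost_lt (ltry _))).
apply: le_trans (ge0_subset_integral _ mXi measurableT mf (fun z _ => f0 z) (@subsetT _ Xi)) _.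
have mid := @measurable_id _ (Rp R p) setT.
rewrite (ge0_integral_comp_same_image mid measurable_snd (same_image_snd cpl) mf f0).
have mS := measurableX (measurable_sample_range xi) (@measurableT _ (Rp R p)).
have S_conull : Pi (~` (range xi `*` setT)) = 0.
  apply: (coupling_conull_setX cpl (measurable_sample_range xi) measurableT).
    by apply: empirical_conull => k; exists k.
  by rewrite setCT measure0.
rewrite (integral_setT_conull mS S_conull); last exact: measurableT_comp mf measurable_snd.
apply: (@le_trans _ _ (\int[Pi]_(z in range xi `*` setT) (xi_dist z.1 z.2)%:E)).
  apply: ge0_le_integral => //.
  - exact: measurable_funTS (measurableT_comp mf measurable_snd).
  - exact: measurable_funTS measurable_transport_integrand.
  - by move=> [z1 z] [[k _ /= <-] _]; rewrite lee_fin xi_distC sample_dist_le.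
apply: ge0_subset_integral => //; first exact: measurable_transport_integrand.
by move=> z _; rewrite lee_fin xi_dist_ge0.
Qed.

Hypothesis Xi_xi : forall k, Xi (xi k).
Variables (phi : Rp R p -> R) (L : R).
Hypotheses (L0 : (0 <= L)%R) (mphi : measurable_fun Xi phi).
Hypothesis phi_lip :
  forall z z', Xi z -> Xi z' -> (`|phi z - phi z'| <= L * xi_dist z z')%R.

Let psi : Rp R p -> \bar R := (EFin \o phi) \_ Xi.

Let mpsi : measurable_fun setT psi.
Proof.
apply: (measurable_restrictT _ mXi).1.
exact/measurable_EFinP.
Qed.

Lemma coupling_conull_Xi Q Pi : coupling (empirical xi) Q Pi -> Q Xi = 1 ->
  Pi (~` (Xi `*` Xi)) = 0.
Proof.
move=> cpl QXi; apply: (coupling_conull_setX cpl mXi mXi).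
  exact: empirical_conull.
by rewrite probability_setC // QXi subee.
Qed.

Lemma integral_coupling_snd Q Pi : coupling (empirical xi) Q Pi ->
  Q.-integrable Xi (EFin \o phi) ->
  Pi.-integrable setT (psi \o snd) /\
  \int[Pi]_z psi z.2 = \int[Q]_(z in Xi) (phi z)%:E.
Proof.
move=> cpl iQ.
have iQT : Q.-integrable setT (psi \o id) by exact/(integrable_mkcond _ mXi).1.
have mid := @measurable_id _ (Rp R p) setT.
split; first exact: (integrable_comp_same_image mid measurable_snd (same_image_snd cpl)).
rewrite -(integral_comp_same_image mid measurable_snd (same_image_snd cpl) mpsi iQT).
by rewrite [RHS]integral_mkcond.
Qed.

Lemma integrable_coupling_fst Q Pi : coupling (empirical xi) Q Pi -> Q Xi = 1 ->
  Q.-integrable Xi (EFin \o phi) -> transport_cost Pi < +oo ->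
  Pi.-integrable setT (psi \o fst).
Proof.
move=> cpl QXi iQ cost_fin; have [i2 _] := integral_coupling_snd cpl iQ.
have mS : measurable (Xi `*` Xi) := measurableX mXi mXi.
have mpsi1 := measurableT_comp mpsi (@measurable_fst _ _ (Rp R p) (Rp R p)).
apply: (integrable_setT_conull mS (coupling_conull_Xi cpl QXi) mpsi1).
apply: (@le_integrable _ _ _ _ _ mS _ (fun z => `|psi z.2| + (L * xi_dist z.1 z.2)%:E)).
- exact: measurable_funTS.
- move=> [z1 z2] [/= Xz1 Xz2]; rewrite /psi /= !patchT ?inE //=.
  rewrite lee_fin (@ger0_norm _ (_ + _)) ?addr_ge0 ?mulr_ge0 ?xi_dist_ge0 //.
  have -> : phi z1 = (phi z2 + (phi z1 - phi z2))%R by rewrite addrC subrK.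
  by apply: (le_trans (ler_normD _ _)); rewrite lerD2l phi_lip.
- apply: (integrableS measurableT) => //.
  apply: integrableD => //; first exact: integrable_abse i2.
  under eq_fun do rewrite EFinM.
  by apply: integrableZl => //; exact: integrable_transport_integrand.
Qed.

Lemma coupling_lipschitz_bound Q Pi (c : R) : coupling (empirical xi) Q Pi ->
  Q Xi = 1 -> Q.-integrable Xi (EFin \o phi) -> transport_cost Pi <= c%:E ->
  (`|Rintegral Q Xi phi - fine (\int[Pi]_z psi z.1)| <= L * c)%R.
Proof.
move=> cpl QXi iQ cost_c.
have cost_fin : transport_cost Pi < +oo := le_lt_trans cost_c (ltry _).
have [i2 int_snd] := integral_coupling_snd cpl iQ.
have i1 := integrable_coupling_fst cpl QXi iQ cost_fin.
have mS : measurable (Xi `*` Xi) := measurableX mXi mXi.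
have mdiff : measurable_fun setT (fun z => psi z.2 - psi z.1).
  by apply: emeasurable_funB; apply: measurableT_comp mpsi _.
have mLdist : measurable_fun [set: Rp R p * Rp R p]
    (fun z : Rp R p * Rp R p => (L * xi_dist z.1 z.2)%:E).
  apply/measurable_EFinP/measurable_funM; first exact: measurable_cst.
  by apply/measurable_EFinP; exact: measurable_transport_integrand.
have bound : `|\int[Pi]_z psi z.2 - \int[Pi]_z psi z.1| <= L%:E * transport_cost Pi.
  rewrite -integralB // (le_trans (le_abse_integral _ _ mdiff)) //.
  rewrite (integral_setT_conull mS (coupling_conull_Xi cpl QXi)); last first.
    exact: measurableT_comp mdiff.
  have -> : L%:E * transport_cost Pi = \int[Pi]_z (L * xi_dist z.1 z.2)%:E.
    under eq_integral do rewrite EFinM.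
    by rewrite integralZl //; exact: integrable_transport_integrand.
  apply: (le_trans _ (ge0_subset_integral _ mS measurableT mLdist _ (@subsetT _ _))).
    apply: ge0_le_integral => //.
    - exact/measurable_funTS/measurableT_comp.
    - exact: measurable_funTS.
    - move=> [z1 z2] [/= Xz1 Xz2]; rewrite /psi /= !patchT ?inE //= lee_fin xi_distC.
      exact: phi_lip.
  by move=> z _; rewrite lee_fin mulr_ge0 ?xi_dist_ge0.
have cost_finnum : transport_cost Pi \is a fin_num.
  by rewrite ge0_fin_numE ?transport_cost_ge0.
rewrite /Rintegral -int_snd.
move: bound cost_c; rewrite -(fineK (integrable_fin_num measurableT i2)).
rewrite -(fineK (integrable_fin_num measurableT i1)) -(fineK cost_finnum).
rewrite -EFinB -EFinM !lee_fin => bound cost_c.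
by apply: (le_trans bound); rewrite ler_wpM2l.
Qed.

Lemma lipschitz_integral_dW_le Q1 Q2 (a b : R) : Q1 Xi = 1 -> Q2 Xi = 1 ->
  Q1.-integrable Xi (EFin \o phi) -> Q2.-integrable Xi (EFin \o phi) ->
  dW (empirical xi) Q1 <= a%:E -> dW (empirical xi) Q2 <= b%:E ->
  (`|Rintegral Q1 Xi phi - Rintegral Q2 Xi phi| <= L * (a + b))%R.
Proof.
move=> Q1Xi Q2Xi iQ1 iQ2 dW1 dW2; apply/ler_addgt0Pr => e e0.
pose del := (e / (2 * L + 1))%R.
have del0 : (0 < del)%R by rewrite divr_gt0 // ltr_wpDl ?mulr_ge0.
have Ldel : (2 * L * del <= e)%R.
  rewrite /del mulrA ler_pdivrMr ?ltr_wpDl ?mulr_ge0 //.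
  by rewrite mulrDr mulr1 mulrC lerDl ltW.
have [P1 cpl1 cost1] := dW_le_coupling del0 dW1.
have [P2 cpl2 cost2] := dW_le_coupling del0 dW2.
have bound1 := coupling_lipschitz_bound cpl1 Q1Xi iQ1 (ltW cost1).
have bound2 := coupling_lipschitz_bound cpl2 Q2Xi iQ2 (ltW cost2).
have i1 := integrable_coupling_fst cpl1 Q1Xi iQ1 (lt_trans cost1 (ltry _)).
have same_fst : \int[P1]_z psi z.1 = \int[P2]_z psi z.1.
  apply: (integral_comp_same_image measurable_fst measurable_fst _ mpsi i1).
  move=> A mA; transitivity (empirical xi A); first exact: coupling_fst cpl1 mA.
  by symmetry; exact: coupling_fst cpl2 mA.
rewrite same_fst in bound1.
move: (fine _) bound1 bound2 => m bound1 bound2.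
have -> : (Rintegral Q1 Xi phi - Rintegral Q2 Xi phi =
    (Rintegral Q1 Xi phi - m) - (Rintegral Q2 Xi phi - m))%R.
  by rewrite opprB addrA subrK.
apply: (le_trans (ler_normB _ _)); nra.
Qed.

End lipschitz_expectation.

Section derive1_integral.
Context {R : realType} {p K : nat}.
Variables (Xi : set (Rp R p)) (mXi : measurable Xi) (xi : 'I_K -> Rp R p).
Variable k0 : 'I_K.
Hypothesis Xi_xi : forall k, Xi (xi k).
Variables (f : R -> Rp R p -> R) (L r : R).
Hypotheses (L0 : 0 <= L) (r0 : 0 < r).
Hypothesis f_derivable : forall z t, Xi z -> derivable (f^~ z) t 1.
Hypothesis f_derive_continuous : forall z, Xi z -> continuous ('D_1 (f^~ z)).
Hypothesis f_derive_lip : forall z z' t, Xi z -> Xi z' -> `|t| < r ->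
  `|'D_1 (f^~ z) t - 'D_1 (f^~ z') t| <= L * xi_dist z z'.

Let r2_gt0 : 0 < r / 2. Proof. by rewrite divr_gt0. Qed.

Let r2_lt : r / 2 < r. Proof. by rewrite ltr_pdivrMr // ltr_pMr // ltr1n. Qed.

(* By continuity the derivative is bounded on [-r/2, r/2] at each of the
   finitely many sample points; the Lipschitz condition transfers the bound to
   every z through its nearest sample point. *)
Lemma derive1_le_sample_dist : exists2 C, 0 <= C &
  forall z t, Xi z -> `|t| <= r / 2 -> `|'D_1 (f^~ z) t| <= C + L * sample_dist xi k0 z.
Proof.
have sample_bound k : exists c : R, forall t, t \in `[- (r / 2), r / 2] ->
    `|'D_1 (f^~ (xi k)) t| <= c.
  have cont : {within `[- (r / 2), r / 2], continuous (fun t => `|'D_1 (f^~ (xi k)) t|)}.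
    apply: continuous_subspaceT => t.
    apply: (@continuous_comp _ _ _ ('D_1 (f^~ (xi k))) Num.Def.normr).
      exact: f_derive_continuous.
    exact: norm_continuous.
  have [c _ max_c] := EVT_max (ltW (gtrN r2_gt0)) cont.
  by exists `|'D_1 (f^~ (xi k)) c|.
have [c c_bound] := choice sample_bound.
exists (\sum_k `|c k|); first exact: sumr_ge0.
move=> z t Xz t_le; have [k ->] := sample_dist_attained xi k0 z.
have t_in : t \in `[- (r / 2), r / 2] by rewrite in_itv /= -ler_norml.
rewrite -[X in `|X|](subrK ('D_1 (f^~ (xi k)) t)) addrC.
apply: (le_trans (ler_normD _ _)); apply: lerD.
  apply: (le_trans (c_bound k t t_in)); apply: (le_trans (ler_norm _)).
  by rewrite (bigD1 k) //= lerDl sumr_ge0.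
by apply: f_derive_lip => //; exact: le_lt_trans t_le r2_lt.
Qed.

Lemma measurable_derive1 : (forall t, measurable_fun Xi (f t)) ->
  measurable_fun Xi (fun z => 'D_1 (f^~ z) 0).
Proof.
move=> mf; apply: (measurable_fun_cvg
  (h := fun m z => (harmonic m)^-1 * (f (harmonic m) z - f 0 z))) => [m|z Xz].
  by apply: measurable_funM; [exact: measurable_cst|exact: measurable_funB].
have harmonic_dnbhs : (forall m, harmonic m != 0 :> R) /\ harmonic m @[m --> \oo] --> (0 : R).
  by split; [move=> m; rewrite invr_eq0 pnatr_eq0|exact: cvg_harmonic].
have := (cvgr_dnbhsP _ _ _).1 (@f_derivable z 0 Xz) harmonic harmonic_dnbhs.
apply: cvg_trans; apply: near_eq_cvg; apply: nearW => m /=.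
by rewrite /GRing.scale /= mulr1 addr0.
Qed.

Lemma derive1_integral (Q : probability (Rp R p) R) :
  (forall t, measurable_fun Xi (f t)) ->
  (forall t, `|t| < r -> Q.-integrable Xi (EFin \o f t)) ->
  Q.-integrable Xi (fun z => (L * sample_dist xi k0 z)%:E) ->
  'D_1 (fun t => Rintegral Q Xi (f t)) 0 = Rintegral Q Xi (fun z => 'D_1 (f^~ z) 0) /\
  Q.-integrable Xi (fun z => ('D_1 (f^~ z) 0)%:E).
Proof.
move=> mf intf iL; have [C C0 C_bound] := derive1_le_sample_dist.
pose G z := C + L * sample_dist xi k0 z.
have G0 z : 0 <= G z by rewrite addr_ge0 // mulr_ge0 // sample_dist_ge0.
have iG : Q.-integrable Xi (EFin \o G).
  rewrite /G /comp; under eq_fun do rewrite EFinD.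
  by apply: integrableD => //; exact: finite_measure_integrable_cst.
split; last first.
  apply: (le_integrable mXi _ _ iG).
    by apply/measurable_EFinP; exact: measurable_derive1.
  move=> z Xz; rewrite /= !lee_fin (ger0_norm (G0 z)).
  by apply: C_bound; rewrite // normr0 ltW.
have in_r2 t : `](- (r / 2)), (r / 2)[%classic t -> `|t| < r / 2.
  by rewrite /= in_itv /= ltr_norml.
have zero_in : `](- (r / 2)), (r / 2)[%classic 0 by rewrite /= in_itv /= oppr_lt0 r2_gt0.
have G_bound t z : `](- (r / 2)), (r / 2)[%classic t -> Xi z ->
    `|partial1of2 f t z| <= G z.
  by move=> It Xz; rewrite partial1of2E; exact: C_bound Xz (ltW (in_r2 t It)).
have := cvg_differentiation_under_integral mXi zero_in
  (fun t It => intf t (lt_trans (in_r2 t It) r2_lt)) (fun t z _ Xz => @f_derivable z t Xz)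
  G0 iG G_bound.
rewrite /derive; set F := fun t => Rintegral Q Xi (f t).
have -> : (fun h : R => h^-1 *: ((fun t => \int[Q]_(z in Xi) f t z) (h + 0) -
    (fun t => \int[Q]_(z in Xi) f t z) 0)) =
    (fun h : R => h^-1 *: ((F \o shift 0) (h *: 1) - F 0)).
  by apply: funext => h; rewrite /= /GRing.scale /= mulr1.
move=> /(cvg_lim (@norm_hausdorff R R^o)) ->.
by apply: eq_Rintegral => z _; rewrite partial1of2E.
Qed.

End derive1_integral.

Section line_derivative.
Context {R : realType} {U W : normedModType R}.

Let difference_quotient_line (F : U -> W) (a e : U) (t : R) :
  (fun s : R => s^-1 *: (((fun s0 : R => F (s0 *: e + a)) \o shift t) (s *: 1) -
     F (t *: e + a))) =
  (fun s : R => s^-1 *: ((F \o shift (t *: e + a)) (s *: e) - F (t *: e + a))).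
Proof.
apply: funext => s /=; congr (_ *: (F _ - _)).
by rewrite scalerDl addrA; congr (_ *: _ + _ + _); exact: mulr1.
Qed.

Lemma derive1_comp_line (F : U -> W) (a e : U) (t : R) :
  'D_1 (fun s : R => F (s *: e + a)) t = 'D_e F (t *: e + a).
Proof. by rewrite /derive difference_quotient_line. Qed.

Lemma derivable1_comp_line (F : U -> W) (a e : U) (t : R) :
  derivable F (t *: e + a) e -> derivable (fun s : R => F (s *: e + a)) t 1.
Proof. by rewrite /derivable difference_quotient_line. Qed.

Lemma open_line_nbhs (S : set U) (a e : U) : open S -> S a ->
  exists2 r : R, 0 < r & forall t : R, `|t| < r -> S (t *: e + a).
Proof.
move=> oS Sa.
have line_cont : {for 0, continuous (fun t : R => t *: e + a)}.
  by apply: cvgD; [exact: scalel_continuous|exact: cvg_cst].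
have : nbhs ((fun t : R => t *: e + a) 0) S.
  by rewrite scale0r add0r; exact: open_nbhs_nbhs.
move=> /line_cont /nbhs_ballP[r /= r0 rS].
by exists r => // t tr; apply: rS; rewrite -ball_normE /= sub0r normrN.
Qed.

End line_derivative.

Section partial_derivative.
Context {R : realType} {N n : nat}.
Variables (x : 'M[R]_(N, n)) (i : 'I_N) (j : 'I_n).

Lemma replace_row_line (s : R) :
  replace_row x i (s *: delta_mx ord0 j + row i x) = s *: delta_mx i j + x.
Proof.
apply/matrixP => a b; rewrite /replace_row !mxE eqxx /=.
by case: eqP => [->|_] //=; rewrite mulr0 add0r.
Qed.

Lemma row_line_other (k : 'I_N) (t : R) :
  k != i -> row k (t *: delta_mx i j + x) = row k x.
Proof. by move=> ki; apply/matrixP => a b; rewrite !mxE (negbTE ki) mulr0 add0r. Qed.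

End partial_derivative.

Section component_bound.
Context {R : realType} {N n p K : nat}.
Variables (X : 'I_N -> set 'rV[R]_n) (Xi : set (Rp R p))
  (H : 'M[R]_(N, n) -> Rp R p -> R) (xi : 'I_K -> Rp R p)
  (i : 'I_N) (j : 'I_n) (L : R) (V : set 'M[R]_(N, n)) (x : 'M[R]_(N, n)).
Let XX := [set y : 'M[R]_(N, n) | forall k, X k (row k y)].
Hypotheses (mXi : measurable Xi) (K_gt0 : (0 < K)%N) (Xi_xi : forall k, Xi (xi k)).
Hypothesis L0 : 0 <= L.
Hypothesis H_regular : forall y : 'M[R]_(N, n), (forall k, k != i -> X k (row k y)) ->
  measurable_fun Xi (H y) /\
  forall z, Xi z ->
    (forall w : 'rV[R]_n, differentiable (fun w' => H (replace_row y i w') z) w) /\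
    (forall j : 'I_n, continuous
       (fun w : 'rV[R]_n => 'D_(delta_mx ord0 j) (fun w' => H (replace_row y i w') z) w)).
Hypothesis H_lip : forall (y : 'M[R]_(N, n)) (z z' : Rp R p), XX y -> Xi z -> Xi z' ->
  `|'D_(delta_mx i j) (fun y' => H y' z) y - 'D_(delta_mx i j) (fun y' => H y' z') y|
    <= L * xi_dist z z'.
Hypotheses (oV : open V) (VX : V `<=` XX) (Vx : V x).

Let v : 'M[R]_(N, n) := delta_mx i j.
Let e : 'rV[R]_n := delta_mx ord0 j.
Let line (t : R) (z : Rp R p) := H (t *: v + x) z.
Let G (z : Rp R p) (w : 'rV[R]_n) := H (replace_row x i w) z.
Let k0 : 'I_K := Ordinal K_gt0.

Let X_line t k : k != i -> X k (row k (t *: v + x)).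
Proof. by move=> ki; rewrite row_line_other //; exact: VX. Qed.

Let X_x k : k != i -> X k (row k x).
Proof. by move=> _; exact: VX. Qed.

Let lineE z : line^~ z = (fun s => G z (s *: e + row i x)).
Proof. by apply: funext => s; rewrite /G replace_row_line. Qed.

Let derive1_line z t : 'D_1 (line^~ z) t = 'D_v (fun y => H y z) (t *: v + x).
Proof. exact: derive1_comp_line. Qed.

Let derivable_line z t : Xi z -> derivable (line^~ z) t 1.
Proof.
move=> Xz; rewrite lineE; apply: derivable1_comp_line.
exact/diff_derivable/((H_regular X_x).2 z Xz).1.
Qed.

Let continuous_derive1_line z : Xi z -> continuous ('D_1 (line^~ z)).
Proof.
move=> Xz; rewrite lineE.
have -> : 'D_1 (fun s : R => G z (s *: e + row i x)) =
    (fun t => 'D_e (G z) (t *: e + row i x)).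
  by apply: funext => t; exact: derive1_comp_line.
move=> t; apply: (@continuous_comp _ _ _ (fun t : R => t *: e + row i x) ('D_e (G z))).
  by apply: cvgD; [exact: scalel_continuous|exact: cvg_cst].
exact: ((H_regular X_x).2 z Xz).2.
Qed.

Lemma derive_expcost (Q : probability (Rp R p) R) :
  (forall y, XX y -> Q.-integrable Xi (fun z => (H y z)%:E)) ->
  Q.-integrable Xi (fun z => (L * sample_dist xi k0 z)%:E) ->
  'D_v (expcost Xi Q H) x = Rintegral Q Xi (fun z => 'D_v (fun y => H y z) x) /\
  Q.-integrable Xi (fun z => ('D_v (fun y => H y z) x)%:E).
Proof.
move=> iH iL; have [r r0 rV] := open_line_nbhs v oV Vx.
have line_lip z z' t : Xi z -> Xi z' -> `|t| < r ->
    `|'D_1 (line^~ z) t - 'D_1 (line^~ z') t| <= L * xi_dist z z'.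
  by move=> Xz Xz' /rV Vt; rewrite !derive1_line; exact: H_lip (VX Vt) Xz Xz'.
have [D_eq int_D] := derive1_integral mXi Xi_xi L0 r0 derivable_line
  continuous_derive1_line line_lip (fun t => (H_regular (X_line t)).1)
  (fun t tr => iH _ (VX (rV t tr))) iL.
have line0 z : 'D_1 (line^~ z) 0 = 'D_v (fun y => H y z) x.
  by rewrite derive1_line scale0r add0r.
split; last by under eq_fun do rewrite -line0.
have := derive1_comp_line (expcost Xi Q H) x v 0; rewrite scale0r add0r => <-.
by rewrite D_eq; apply: eq_Rintegral => z _; exact: line0.
Qed.

Let partial_lip z z' : Xi z -> Xi z' ->
  `|'D_v (fun y => H y z) x - 'D_v (fun y => H y z') x| <= L * xi_dist z z'.
Proof. exact: H_lip (VX Vx). Qed.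

Lemma derive_expcost_dist_le (q P : probability (Rp R p) R) (a b : R) :
  q Xi = 1%E -> P Xi = 1%E ->
  (forall y, XX y ->
     q.-integrable Xi (fun z => (H y z)%:E) /\ P.-integrable Xi (fun z => (H y z)%:E)) ->
  (dW (empirical xi) q <= a%:E)%E -> (dW (empirical xi) P <= b%:E)%E ->
  `|'D_v (expcost Xi q H) x - 'D_v (expcost Xi P H) x| <= L * (a + b).
Proof.
move=> qXi PXi iH dWq dWP.
have iL (Q : probability (Rp R p) R) c : (dW (empirical xi) Q <= c%:E)%E ->
    Q.-integrable Xi (fun z => (L * sample_dist xi k0 z)%:E).
  move=> dWc; under eq_fun do rewrite EFinM.
  exact: integrableZl (integrable_sample_dist mXi k0 dWc).
have [-> ig_q] := derive_expcost (fun y Xy => (iH y Xy).1) (iL _ _ dWq).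
have [-> ig_P] := derive_expcost (fun y Xy => (iH y Xy).2) (iL _ _ dWP).
apply: (lipschitz_integral_dW_le mXi Xi_xi L0 _ partial_lip qXi PXi ig_q ig_P dWq dWP).
by apply/measurable_EFinP; case/integrableP: ig_q.
Qed.

Lemma derive_expcost_sqr_le (q P : probability (Rp R p) R) (eps : R) :
  P Xi = 1%E -> 0 <= eps ->
  (forall y, XX y ->
     q.-integrable Xi (fun z => (H y z)%:E) /\ P.-integrable Xi (fun z => (H y z)%:E)) ->
  wball Xi eps (empirical xi) q ->
  ((('D_v (expcost Xi q H) x - 'D_v (expcost Xi P H) x) ^+ 2)%:E
   <= (L ^+ 2)%:E * ((eps%:E + dW (empirical xi) P) * (eps%:E + dW (empirical xi) P)))%E.
Proof.
move=> PXi eps0 iH [[qXi _] dWq].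
case dWP : (dW (empirical xi) P) (dW_ge0 (empirical xi) P) => [b| |] // b0.
  have : `|'D_v (expcost Xi q H) x - 'D_v (expcost Xi P H) x| <= L * (eps + b).
    by apply: derive_expcost_dist_le qXi PXi iH dWq _; rewrite dWP.
  rewrite -EFinD -!EFinM lee_fin ler_norml => /andP[lo hi].
  have M0 : 0 <= L * (eps + b) by rewrite mulr_ge0 // addr_ge0.
  nra.
have [L_eq0|L_gt0] := eqVneq L 0; last first.
  rewrite addey // mulyy mulry gtr0_sg ?mul1e ?leey //.
  by rewrite exprn_gt0 // lt_def L_gt0.
have iL (Q : probability (Rp R p) R) :
    Q.-integrable Xi (fun z => (L * sample_dist xi k0 z)%:E).
  rewrite L_eq0; under eq_fun do rewrite mul0r.
  exact: finite_measure_integrable_cst.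
pose g z := 'D_v (fun y => H y z) x.
have g_cst z : Xi z -> g z = g (xi k0).
  move=> Xz; apply/eqP; rewrite -subr_eq0 -normr_le0.
  by rewrite -(mul0r (xi_dist z (xi k0))) -L_eq0 partial_lip.
rewrite (derive_expcost (fun y Xy => (iH y Xy).1) (iL q)).1.
rewrite (derive_expcost (fun y Xy => (iH y Xy).2) (iL P)).1.
rewrite (Rintegral_cst_on mXi qXi g_cst) (Rintegral_cst_on mXi PXi g_cst).
by rewrite subrr expr0n L_eq0 expr0n mul0e.
Qed.

End component_bound.

Theorem lemma6 (R : realType) (N n p : nat)
  (X : 'I_N -> set 'rV[R]_n) (Xi : 'I_N -> set (Rp R p))
  (h : 'I_N -> 'M[R]_(N, n) -> Rp R p -> R)
  (P : 'I_N -> probability (Rp R p) R)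
  (K : 'I_N -> nat) (xi : forall i : 'I_N, 'I_(K i) -> Rp R p)
  (eps : 'I_N -> R) (L : 'I_N -> 'I_n -> R)
  (V : set 'M[R]_(N, n)) (q : 'I_N -> probability (Rp R p) R)
  (x : 'M[R]_(N, n)) :
  let XX := [set y : 'M[R]_(N, n) | forall i, X i (row i y)] in
  (* setting *)
  (forall i, measurable (Xi i)) ->
  (forall i, P i (Xi i) = 1%E) ->
  (forall i, (0 < K i)%N) ->
  (forall i k, Xi i (xi i k)) ->
  (forall i, 0 <= eps i) ->
  (* (1) measurability in xi and C^1 in x_i *)
  (forall i (y : 'M[R]_(N, n)), (forall k, k != i -> X k (row k y)) ->
     measurable_fun (Xi i) (h i y) /\
     forall z : Rp R p, Xi i z ->
       (forall w : 'rV[R]_n, differentiable (fun w' => h i (replace_row y i w') z) w) /\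
       (forall j : 'I_n, continuous
          (fun w : 'rV[R]_n => 'D_(delta_mx ord0 j) (fun w' => h i (replace_row y i w') z) w))) ->
  (* (2) compact convex strategy sets, convex costs *)
  (forall i, compact (X i) /\ convex_set (X i : set (convex_lmodType 'rV[R]_n))) ->
  (forall i (y : 'M[R]_(N, n)) (z : Rp R p), (forall k, k != i -> X k (row k y)) ->
     Xi i z ->
     convex_function (setT : set (convex_lmodType 'rV[R]_n))
       (fun w : convex_lmodType 'rV[R]_n => h i (replace_row y i w) z : R^o)) ->
  (* (3) light-tailed ambiguity sets *)
  (forall i, exists a : R, 1 < a /\
     forall Q, wball (Xi i) (eps i) (empirical (xi i)) Q ->
       distr_M (Xi i) Q /\
       (\int[Q]_(z in Xi i) (expR (enorm (z : 'rV[R]_p) `^ a))%:E < +oo)%E) ->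
  (* (4) Lipschitz continuity of the partial gradients in xi *)
  (forall i j, 0 <= L i j) ->
  (forall i j (y : 'M[R]_(N, n)) (z z' : Rp R p), XX y -> Xi i z -> Xi i z' ->
     `|'D_(delta_mx i j) (fun y' => h i y' z) y - 'D_(delta_mx i j) (fun y' => h i y' z') y|
       <= L i j * xi_dist z z') ->
  (* the expected costs are well defined (finite) on X *)
  (forall i (y : 'M[R]_(N, n)), XX y ->
     (q i).-integrable (Xi i) (fun z => (h i y z)%:E) /\
     (P i).-integrable (Xi i) (fun z => (h i y z)%:E)) ->
  (* x in an open V included in X, q in the product of Wasserstein balls *)
  open V -> V `<=` XX -> V x ->
  (forall i, wball (Xi i) (eps i) (empirical (xi i)) (q i)) ->
  ((\sum_(i < N) \sum_(j < n) (Fcomp Xi q h x i j - Fcomp Xi P h x i j) ^+ 2)%:E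
   <= \sum_(i < N) \sum_(j < n)
        ((L i j ^+ 2)%:E * (((eps i)%:E + dW (empirical (xi i)) (P i)) *
                            ((eps i)%:E + dW (empirical (xi i)) (P i)))))%E.
Proof.
move=> XX mXi PXi K_gt0 Xi_xi eps0 h_regular _ _ _ L0 h_lip h_int oV VX Vx q_ball.
rewrite -sumEFin; apply: lee_sum => i _; rewrite -sumEFin; apply: lee_sum => j _.
exact: (derive_expcost_sqr_le (mXi i) (K_gt0 i) (Xi_xi i) (L0 i j) (h_regular i)
  (h_lip i j) oV VX Vx (PXi i) (eps0 i) (h_int i) (q_ball i)).
Qed.
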